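(* For $n\ge 1$, let $\operatorname{NE}_n(k)$ denote the number of permutations $\sigma\in\mathfrak{S}_n$ with nesting number $\operatorname{Ne}(\sigma)=k$. Then \[\operatorname{NE}_n(\lceil n/2\rceil)=\begin{cases} m! & \text{if } n=2m+1,\\ 2(m+1)!-(m-1)!-1 & \text{if } n=2m.\end{cases}\]
   Context: For $\sigma\in\mathfrak{S}_n$, the arcs of $\sigma$ are the pairs $(a,\sigma(a))$, $1\le a\le n$. A $k$-nesting of $\sigma$ is a set of $k$ arcs $\{(a_i,\sigma(a_i)):1\le i\le k\}$ satisfying either $a_1<a_2<\dots<a_k\le\sigma(a_k)<\dots<\sigma(a_2)<\sigma(a_1)$ (upper $k$-nesting; loops $a=\sigma(a)$ are allowed) or $\sigma(a_1)<\sigma(a_2)<\dots<\sigma(a_k)<a_k<\dots<a_2<a_1$ (lower $k$-nesting). The nesting number $\operatorname{Ne}(\sigma)$ is the largest $k$ such that $\sigma$ has a $k$-nesting. *)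

(* Positions 1..n are represented 0-indexed by 'I_n. *)
From mathcomp Require Import all_boot all_order all_fingroup.
Set Implicit Arguments. Unset Strict Implicit. Unset Printing Implicit Defensive.

(* upper k-nesting: a_1 < ... < a_k <= s(a_k) < ... < s(a_1); the tuple t lists a_1..a_k *)
Definition upper_nesting n (s : 'S_n) k (t : k.-tuple 'I_n) : bool :=
  [&& sorted (fun x y : 'I_n => (x < y)%N) t,
      sorted (fun x y : 'I_n => (y < x)%N) (map s t) &
      (if val t is x :: _ then (last x t <= s (last x t))%N else true)].

(* lower k-nesting: s(a_1) < ... < s(a_k) < a_k < ... < a_1; t lists a_1..a_k *)
Definition lower_nesting n (s : 'S_n) k (t : k.-tuple 'I_n) : bool :=
  [&& sorted (fun x y : 'I_n => (y < x)%N) t,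
      sorted (fun x y : 'I_n => (x < y)%N) (map s t) &
      (if val t is x :: _ then (s (last x t) < last x t)%N else true)].

Definition has_nesting n (s : 'S_n) k : bool :=
  [exists t : k.-tuple 'I_n, upper_nesting s t || lower_nesting s t].

(* nesting number: the largest k with a k-nesting (any nesting has k <= n) *)
Definition Ne n (s : 'S_n) : nat := \max_(k < n.+1 | has_nesting s k) k.

Definition NE n k : nat := #|[set s : 'S_n | Ne s == k]|.

From mathcomp Require Import all_boot all_order all_fingroup zify.
Set Implicit Arguments. Unset Strict Implicit. Unset Printing Implicit Defensive.

(* The left ends of a k-nesting increase strictly and its right ends decrease
   strictly, so an upper k-nesting occupies at least 2k-1 positions and a lower
   one 2k: Ne(s) <= ceil(n/2), with equality iff s has a ceil(n/2)-nesting.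
   For n = 2m+1 such a nesting is upper with no room to spare, so it is forced to
   be the arcs (i, 2m-i), i <= m; the other m points are free: m! permutations.
   For n = 2m it is either lower and forced, or upper with one spare position,
   located among the right ends (m+1 ways) or among the left ends (m ways).  Each
   of these 2m+2 families prescribes s on m points and so has m! members; they
   overlap only in (m-1)! permutations common to the two upper kinds and in the
   reversal, and inclusion-exclusion gives 2(m+1)! - (m-1)! - 1. *)

Section PrescribedPermutations.

Variable n : nat.

Lemma perm_extend (l : seq 'I_n) (f : 'I_n -> 'I_n) :
  {in l &, injective f} -> exists g : 'S_n, {in l, g =1 f}.
Proof.
elim: l => [|x l IH] injf; first by exists 1%g.
have [|g gf] := IH; first by move=> y z yl zl; apply: injf; rewrite inE ?yl ?zl orbT.
exists (g * tperm (g x) (f x))%g => y; rewrite inE => /predU1P[->|yl].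
  by rewrite permM tpermL.
have [->|nyx] := eqVneq y x; first by rewrite permM tpermL.
have fyx : f y != f x.
  by apply: contra nyx => /eqP/injf-> //; rewrite inE ?yl ?eqxx ?orbT.
rewrite permM (gf y yl) tpermD 1?eq_sym //.
by apply: contra nyx => /eqP; rewrite -(gf y yl) => /perm_inj->.
Qed.

Lemma card_perm_agree_on (g : 'S_n) (X : {set 'I_n}) :
  #|[set s : 'S_n | [forall x in X, s x == g x]]| = #|~: X|`!.
Proof.
rewrite -card_perm -(card_imset (perm_on (~: X)) (mulIg g)).
apply: eq_card => s; rewrite inE; apply/forall_inP/imsetP.
- move=> sg; exists (s * g^-1)%g; last by rewrite -mulgA mulVg mulg1.
  apply/subsetP => x; rewrite !inE; apply: contraNN => Xx.
  by rewrite permM (eqP (sg x Xx)) permK.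
- by move=> [p onp ->] x Xx; rewrite permM (out_perm onp) // inE negbK.
Qed.

Definition prescribed (X : pred nat) (F : nat -> nat) : {set 'S_n} :=
  [set s : 'S_n | [forall x : 'I_n, X x ==> (s x == F x :> nat)]].

Lemma prescribedP (X : pred nat) (F : nat -> nat) (s : 'S_n) :
  reflect (forall x : 'I_n, X x -> s x = F x :> nat) (s \in prescribed X F).
Proof.
rewrite inE; apply: (iffP forallP) => sF x; last by apply/implyP => /sF->.
by move=> Xx; have /implyP/(_ Xx)/eqP := sF x.
Qed.

Lemma card_prescribed (X : pred nat) (F : nat -> nat) :
  (forall x, x < n -> X x -> F x < n) ->
  (forall x y, x < n -> y < n -> X x -> X y -> F x = F y -> x = y) ->
  #|prescribed X F| = (n - count X (iota 0 n))`!.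
Proof.
move=> Fn injF; set Xs := [set x : 'I_n | X x].
pose f (x : 'I_n) : 'I_n := insubd x (F x).
have valf (x : 'I_n) : X x -> f x = F x :> nat by move=> Xx; rewrite val_insubd Fn.
have [|g gf] := @perm_extend (enum Xs) f.
  move=> x y; rewrite !mem_enum !inE => Xx Xy /(congr1 (@nat_of_ord n)).
  by rewrite !valf // => /(injF _ _ (ltn_ord x) (ltn_ord y) Xx Xy)/val_inj.
have -> : count X (iota 0 n) = #|Xs|.
  rewrite cardE size_filter -enumT -val_enum_ord count_map.
  by apply: eq_count => x; rewrite /= inE.
rewrite -[n in n - _]card_ord -(cardsC Xs) addKn -(card_perm_agree_on g).
apply: eq_card => s; rewrite [in RHS]inE.
apply/prescribedP/forall_inP => [sF x | sg x Xx].
  by rewrite inE => Xx; apply/eqP/val_inj => /=; rewrite gf ?mem_enum ?inE // valf // sF.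
by rewrite (eqP (sg x _)) ?inE // gf ?mem_enum ?inE // valf.
Qed.

End PrescribedPermutations.

Lemma count_iota_lt c n : count (fun x => x < c) (iota 0 n) = minn c n.
Proof.
elim: n => [|n IH]; first by rewrite minn0.
by rewrite -addn1 iotaD count_cat IH /= add0n addn0; case: ltnP => ?; lia.
Qed.

Lemma count_iota_ge c n : count (fun x => c <= x) (iota 0 n) = n - c.
Proof.
have := count_predC (fun x => x < c) (iota 0 n).
rewrite count_iota_lt size_iota (@eq_count _ _ (fun x => c <= x)) => [|x]; first by lia.
by rewrite /= -leqNgt.
Qed.

Lemma count_iota_lt_neq c j n : j < c -> c <= n ->
  count (fun x => (x < c) && (x != j)) (iota 0 n) = c.-1.
Proof.
move=> jc cn; have := count_predUI (fun x => (x < c) && (x != j)) (pred1 j) (iota 0 n).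
rewrite (eq_count (a1 := predU _ _) (a2 := fun x => x < c)) => [|x]; last first.
  by rewrite /= orbC; case: eqP => [->|_]; rewrite ?jc ?andbT.
rewrite (eq_count (a1 := predI _ _) (a2 := pred0)) => [|x]; last first.
  by rewrite /= -andbA andNb andbF.
by rewrite count_pred0 count_iota_lt count_uniq_mem ?iota_uniq // mem_iota; lia.
Qed.

Lemma card_bigcup_disjoint (T : finType) (F : nat -> {set T}) k c :
  (forall p, p < k -> #|F p| = c) ->
  (forall p q, p < q < k -> [disjoint F p & F q]) ->
  #|\bigcup_(p < k) F p| = k * c.
Proof.
elim: k => [|k IH] Fc Fdis; first by rewrite big_ord0 cards0.
rewrite big_ord_recr /= cardsU IH => [|p pk|p q /andP[pq qk]]; last 2 first.
- by apply: Fc; rewrite ltnW.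
- by apply: Fdis; rewrite pq ltnW.
rewrite disjoint_setI0 ?cards0 ?subn0 ?Fc ?mulSn 1?addnC //.
rewrite disjoint_sym; apply/bigcup_disjoint => p _.
by rewrite disjoint_sym; apply: Fdis; rewrite ltn_ord /=.
Qed.

Section IncreasingSteps.

Variables (k : nat) (a : nat -> nat).
Hypothesis a_step : forall i, i.+1 < k -> a i < a i.+1.

Lemma ltn_steps_gap i j : i <= j -> j < k -> a i + (j - i) <= a j.
Proof.
elim: j => [|j IH]; first by rewrite leqn0 => /eqP->; rewrite addn0.
rewrite leq_eqVlt ltnS => /predU1P[->|ij jk]; first by rewrite subnn addn0.
by have := IH ij (ltnW jk); have := a_step jk; lia.
Qed.

Lemma ltn_steps_tight c : c <= a 0 -> a k.-1 <= c + k.-1 ->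
  forall i, i < k -> a i = c + i.
Proof.
move=> a0 ak i ik; have := ltn_steps_gap (leq0n i) ik.
by have := @ltn_steps_gap i k.-1 ltac:(lia) ltac:(lia); lia.
Qed.

Lemma ltn_steps_slack1 c : c <= a 0 -> a k.-1 <= c + k ->
  exists2 p, p <= k & forall i, i < k -> a i = c + i + (p <= i).
Proof.
move=> a0 ak; pose P := [pred i | (k <= i) || (a i == c + i.+1)].
have [|p Pp minp] := @ex_minnP P; first by exists k; rewrite inE leqnn.
exists p => [|i ik]; first by apply: minp; rewrite inE leqnn.
have ai_lo := ltn_steps_gap (leq0n i) ik.
have ai_hi := @ltn_steps_gap i k.-1 ltac:(lia) ltac:(lia).
have [ip|pi] := ltnP i p.
  have : ~~ P i by apply: contraTN ip => /minp; rewrite -leqNgt.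
  by rewrite inE negb_or => /andP[_ /eqP]; lia.
have /eqP ap : a p == c + p.+1 by move: Pp; rewrite inE leqNgt (leq_ltn_trans pi ik).
by have := @ltn_steps_gap p i pi ik; lia.
Qed.

End IncreasingSteps.

Section DecreasingSteps.

Variables (k : nat) (b : nat -> nat).
Hypothesis b_step : forall i, i.+1 < k -> b i.+1 < b i.

Lemma gtn_steps_gap i j : i <= j -> j < k -> b j + (j - i) <= b i.
Proof.
elim: j => [|j IH]; first by rewrite leqn0 => /eqP->; rewrite addn0.
rewrite leq_eqVlt ltnS => /predU1P[->|ij jk]; first by rewrite subnn addn0.
by have := IH ij (ltnW jk); have := b_step jk; lia.
Qed.

Lemma gtn_steps_tight c : b 0 <= c -> c <= b k.-1 + k.-1 ->
  forall i, i < k -> b i + i = c.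
Proof.
move=> b0 bk i ik; have := gtn_steps_gap (leq0n i) ik.
by have := @gtn_steps_gap i k.-1 ltac:(lia) ltac:(lia); lia.
Qed.

Lemma gtn_steps_slack1 c : b 0 <= c -> c <= b k.-1 + k ->
  exists2 p, p <= k & forall i, i < k -> b i + i + (p <= i) = c.
Proof.
move=> b0 bk; have bc i : i < k -> b i <= c.
  by move=> ik; have := gtn_steps_gap (leq0n i) ik; lia.
have [i ik|||p pk bp] := @ltn_steps_slack1 k (fun i => c - b i) _ 0.
- by have := b_step ik; have := bc i (ltnW ik); lia.
- by [].
- by lia.
by exists p => // i ik; have := bp i ik; have := bc i ik; lia.
Qed.

End DecreasingSteps.

Lemma match_last_nth (T : Type) (x0 : T) (P : pred T) (l : seq T) : 0 < size l ->
  (if l is x :: _ then P (last x l) else true) = P (nth x0 l (size l).-1).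
Proof. by case: l => //= x l _; rewrite (last_nth x0). Qed.

Section Arcs.

Variables (n : nat) (s : 'S_n) (k : nat).

Definition arcs (a b : nat -> nat) :=
  forall i, i < k -> exists2 x : 'I_n, x = a i :> nat & s x = b i :> nat.

Definition nested_arcs (ra rb rl : rel nat) a b :=
  [/\ arcs a b, forall i, i.+1 < k -> ra (a i) (a i.+1),
      forall i, i.+1 < k -> rb (b i) (b i.+1) & rl (a k.-1) (b k.-1)].

Definition upper_arcs := nested_arcs ltn (fun x y => y < x) leq.
Definition lower_arcs := nested_arcs (fun x y => y < x) ltn (fun x y => y < x).

Lemma arcs_val a b : arcs a b ->
  forall (x : 'I_n) i, i < k -> x = a i :> nat -> s x = b i :> nat.
Proof.
move=> ab x i ik xa; have [y ya <-] := ab i ik.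
by congr (nat_of_ord (s _)); apply: val_inj; rewrite /= xa ya.
Qed.

Lemma arcs_ltn a b : arcs a b -> forall i, i < k -> a i < n /\ b i < n.
Proof. by move=> ab i ik; have [x <- <-] := ab i ik; split; apply: ltn_ord. Qed.

Lemma tuple_arcs (x0 : 'I_n) (t : k.-tuple 'I_n) :
  arcs (fun i => nth x0 t i) (fun i => s (nth x0 t i)).
Proof. by move=> i ik; exists (nth x0 t i). Qed.

Lemma arcs_tuple a b : 0 < k -> arcs a b -> exists t : k.-tuple 'I_n, exists x0,
  forall i, i < k -> nth x0 t i = a i :> nat /\ s (nth x0 t i) = b i :> nat.
Proof.
move=> k0 ab; have [x0 _ _] := ab 0 k0.
pose g i : 'I_n := insubd x0 (a i).
have vg i : i < k -> g i = a i :> nat.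
  by move=> ik; rewrite val_insubd (proj1 (arcs_ltn ab ik)).
exists [tuple of map g (iota 0 k)], x0 => i ik /=.
by rewrite (nth_map 0) ?size_iota // nth_iota // (arcs_val ab ik) vg.
Qed.

Lemma nested_arcsP (ra rb rl : rel nat) : 0 < k ->
  (exists t : k.-tuple 'I_n,
    [&& sorted (relpre (@nat_of_ord n) ra) t, sorted (relpre (@nat_of_ord n) rb) (map s t)
      & if val t is x :: _ then rl (last x t) (s (last x t)) else true])
  <-> exists a b, nested_arcs ra rb rl a b.
Proof.
move=> k0; split=> [[t /and3P[sa sb last_ab]] | [a [b [ab sa sb last_ab]]]].
  pose x0 := tnth t (Ordinal k0).
  exists (fun i => nth x0 t i : nat), (fun i => s (nth x0 t i) : nat); split.
  - exact: tuple_arcs.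
  - by move=> i ik; apply: (sortedP x0 sa); rewrite size_tuple.
  - move=> i ik; have ik' := ltnW ik.
    have := (sortedP (s x0) sb) i; rewrite size_map size_tuple => /(_ ik).
    by rewrite !(nth_map x0) ?size_tuple.
  - by move: last_ab; rewrite (match_last_nth x0 (fun y => rl y (s y))) size_tuple.
have [t [x0 tab]] := arcs_tuple k0 ab; exists t; apply/and3P; split.
- apply/(sortedP x0) => i; rewrite size_tuple => ik /=.
  by have [-> _] := tab i (ltnW ik); have [-> _] := tab i.+1 ik; apply: sa.
- apply/(sortedP (s x0)) => i; rewrite size_map size_tuple => ik /=.
  have ik' := ltnW ik; rewrite !(nth_map x0) ?size_tuple //.
  by have [_ ->] := tab i (ltnW ik); have [_ ->] := tab i.+1 ik; apply: sb.
- rewrite (match_last_nth x0 (fun y => rl y (s y))) size_tuple //.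
  by have [-> ->] := tab k.-1 (ltac:(by rewrite ltn_predL)).
Qed.

Lemma has_nestingP : 0 < k -> reflect
  ((exists a b, upper_arcs a b) \/ (exists a b, lower_arcs a b)) (has_nesting s k).
Proof.
move=> k0; apply: (iffP existsP) => [[t /orP[up | lo]] | [up | lo]].
- by left; apply/nested_arcsP => //; exists t.
- by right; apply/nested_arcsP => //; exists t.
- by have [t ?] := (nested_arcsP _ _ _ k0).2 up; exists t; apply/orP; left.
- by have [t ?] := (nested_arcsP _ _ _ k0).2 lo; exists t; apply/orP; right.
Qed.

Lemma nesting_bound : has_nesting s k -> k <= uphalf n.
Proof.
case: (posnP k) => [-> // | k0 /(has_nestingP k0)].
have kk : k.-1 < k by rewrite ltn_predL.
rewrite geq_uphalf_double => -[[a [b [ab sa sb ak]]] | [a [b [ab sa sb ba]]]].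
- have := ltn_steps_gap sa (leq0n _) kk; have := gtn_steps_gap sb (leq0n _) kk.
  by have [_ b0] := arcs_ltn ab k0; lia.
- have := gtn_steps_gap sa (leq0n _) kk; have := ltn_steps_gap sb (leq0n _) kk.
  by have [a0 _] := arcs_ltn ab k0; lia.
Qed.

End Arcs.

Lemma prescribed_arcs n X F (s : 'S_n) k a b : s \in prescribed n X F ->
  (forall i, i < k -> [/\ a i < n, X (a i) & F (a i) = b i]) -> arcs s k a b.
Proof.
move=> /prescribedP sF abF i ik; have [an Xa <-] := abF i ik.
by exists (Ordinal an); rewrite ?sF.
Qed.

Lemma perm_nat_inj n (s : 'S_n) (x y : 'I_n) : s x = s y :> nat -> x = y :> nat.
Proof. by move/val_inj/perm_inj->. Qed.

Lemma has_nesting0 n (s : 'S_n) : has_nesting s 0.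
Proof. by apply/existsP; exists [tuple]. Qed.

Lemma has_nesting_Ne n (s : 'S_n) : has_nesting s (Ne s).
Proof.
rewrite /Ne; pose P (k : 'I_n.+1) := has_nesting s k.
have [|k nk ->] := @eq_bigmax_cond _ P (@nat_of_ord _) => //.
by apply/card_gt0P; exists ord0; apply: has_nesting0.
Qed.

Lemma Ne_uphalfE n (s : 'S_n) : (Ne s == uphalf n) = has_nesting s (uphalf n).
Proof.
apply/eqP/idP => [<- | sn]; first exact: has_nesting_Ne.
pose P (k : 'I_n.+1) := has_nesting s k.
have un : uphalf n < n.+1 by rewrite ltnS leq_uphalf_double -addnn leq_addr.
apply/eqP; rewrite eqn_leq; apply/andP; split.
  by apply/bigmax_leqP => k; apply: nesting_bound.
exact: (@leq_bigmax_cond _ P (@nat_of_ord _) (Ordinal un)).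
Qed.

Lemma NE_uphalf n : NE n (uphalf n) = #|[set s : 'S_n | has_nesting s (uphalf n)]|.
Proof. by apply: eq_card => s; rewrite !inE Ne_uphalfE. Qed.

Lemma odd_uphalf_nestingE m (s : 'S_(m.*2.+1)) :
  has_nesting s m.+1 = (s \in prescribed _ (fun x => x < m.+1) (fun x => m.*2 - x)).
Proof.
have m1 := ltnSn m; apply/(has_nestingP s (ltn0Sn m))/idP.
  case=> [[a [b [ab sa sb /= ab_last]]] | [a [b [ab sa sb /= ba_last]]]].
    have [_ b0] := arcs_ltn ab (ltn0Sn m).
    have := ltn_steps_gap sa (leq0n _) m1; have := gtn_steps_gap sb (leq0n _) m1.
    rewrite subn0 => gapb gapa.
    have ai := @ltn_steps_tight _ _ sa 0 (leq0n _) ltac:(simpl; lia).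
    have bi := @gtn_steps_tight _ _ sb m.*2 ltac:(lia) ltac:(simpl; lia).
    apply/prescribedP => x xm /=; rewrite (arcs_val ab xm (esym (ai x xm))).
    by have := bi x xm; lia.
  have [a0 _] := arcs_ltn ab (ltn0Sn m).
  have := gtn_steps_gap sa (leq0n _) m1; have := ltn_steps_gap sb (leq0n _) m1; lia.
move=> sF; left; exists id, (fun x => m.*2 - x); split=> /= [|i|i|]; try lia.
by apply: prescribed_arcs sF _ => i im; split=> //; lia.
Qed.

Lemma NE_odd m : NE m.*2.+1 (uphalf m.*2.+1) = m`!.
Proof.
rewrite NE_uphalf; have -> : uphalf m.*2.+1 = m.+1 by rewrite uphalfE -doubleS doubleK.
rewrite (eq_card (B := prescribed _ (fun x => x < m.+1) (fun x => m.*2 - x))) => [|s].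
  2: by rewrite inE odd_uphalf_nestingE.
rewrite card_prescribed ?count_iota_lt => [|x xn Xx|x y xn yn Xx Xy]; try lia.
by congr _`!; lia.
Qed.

Section EvenCase.

Variable m : nat.
Hypothesis m_gt0 : 0 < m.

(* An upper [m]-nesting of [s : 'S_(2m)] uses [2m-1] of the [2m] positions.
   Either its left ends are [0..m-1] and its right ends are [m-1..2m-1] without
   [2m-1-p] ([skip_right p]), or its left ends are [0..m] without [j] and its
   right ends are [m..2m-1] ([skip_left j]).  A lower [m]-nesting uses every
   position, which forces [lower_full]. *)
Definition skip_right p : {set 'S_(m.*2)} :=
  prescribed _ (fun x => x < m) (fun x => m.*2.-1 - x - (p <= x)).

Definition skip_left j : {set 'S_(m.*2)} :=
  prescribed _ (fun x => (x < m.+1) && (x != j)) (fun x => m.*2 - x - (x < j)).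

Definition lower_full : {set 'S_(m.*2)} :=
  prescribed _ (fun x => m <= x) (fun x => m.*2.-1 - x).

Definition skip_both : {set 'S_(m.*2)} :=
  prescribed _ (fun x => x < m.+1) (fun x => if x < m.-1 then m.*2.-1 - x else x).

Definition skip_right_any := \bigcup_(p < m.+1) skip_right p.
Definition skip_left_any := \bigcup_(j < m) skip_left j.

Lemma upper_arcs_even (s : 'S_(m.*2)) a b :
  upper_arcs s m a b -> s \in skip_right_any :|: skip_left_any.
Proof.
move=> [ab sa sb ab_last]; have m1 : m.-1 < m by rewrite ltn_predL.
have := ltn_steps_gap sa (leq0n _) m1; have := gtn_steps_gap sb (leq0n _) m1.
have [_ b0] := arcs_ltn ab m_gt0; rewrite subn0 => gapb gapa.
have [a_tight | a_slack] := leqP (a m.-1) m.-1.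
  have ai := @ltn_steps_tight _ _ sa 0 (leq0n _) a_tight.
  have [p pm bi] := @gtn_steps_slack1 _ _ sb m.*2.-1 ltac:(lia) ltac:(lia).
  apply/setUP; left; apply/bigcupP; exists (Ordinal (pm : p < m.+1)) => //.
  apply/prescribedP => x xm /=; rewrite (arcs_val ab xm (esym (ai x xm))).
  by have := bi x xm; lia.
have bi := @gtn_steps_tight _ _ sb m.*2.-1 ltac:(lia) ltac:(lia).
have [p pm ai] := @ltn_steps_slack1 _ _ sa 0 (leq0n _) ltac:(lia).
have {pm} pm : p < m by have := ai _ m1; lia.
apply/setUP; right; apply/bigcupP; exists (Ordinal pm) => //.
apply/prescribedP => x /= /andP[x_le_m x_neq_p]; have [x_lt_p | p_lt_x] := ltnP x p.
  have xm : x < m by lia.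
  have ax : x = a x :> nat by have := ai x xm; lia.
  by rewrite (arcs_val ab xm ax); have := bi x xm; lia.
have x1m : x.-1 < m by lia.
have ax : x = a x.-1 :> nat by have := ai x.-1 x1m; lia.
by rewrite (arcs_val ab x1m ax); have := bi x.-1 x1m; lia.
Qed.

Lemma lower_arcs_even (s : 'S_(m.*2)) a b : lower_arcs s m a b -> s \in lower_full.
Proof.
move=> [ab sa sb ba_last]; have m1 : m.-1 < m by rewrite ltn_predL.
have := gtn_steps_gap sa (leq0n _) m1; have := ltn_steps_gap sb (leq0n _) m1.
have [a0 _] := arcs_ltn ab m_gt0; rewrite subn0 => gapb gapa.
have ai := @gtn_steps_tight _ _ sa m.*2.-1 ltac:(lia) ltac:(lia).
have bi := @ltn_steps_tight _ _ sb 0 (leq0n _) ltac:(lia).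
apply/prescribedP => x /= mx; have xm : m.*2.-1 - x < m by have := ltn_ord x; lia.
have ax : x = a (m.*2.-1 - x) :> nat by have := ai _ xm; have := ltn_ord x; lia.
by rewrite (arcs_val ab xm ax) bi.
Qed.

Lemma skip_right_nesting p (s : 'S_(m.*2)) : s \in skip_right p -> has_nesting s m.
Proof.
move=> sR; apply/(has_nestingP s m_gt0); left.
exists id, (fun x => m.*2.-1 - x - (p <= x)); split=> /= [|i|i|]; try lia.
by apply: prescribed_arcs sR _ => i im; split=> //; lia.
Qed.

Lemma skip_left_nesting j (s : 'S_(m.*2)) : j < m -> s \in skip_left j -> has_nesting s m.
Proof.
move=> jm sL; apply/(has_nestingP s m_gt0); left.
exists (fun i => i + (j <= i)), (fun i => m.*2.-1 - i); split=> /= [|i|i|]; try lia.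
by apply: prescribed_arcs sL _ => i im /=; split; lia.
Qed.

Lemma lower_full_nesting (s : 'S_(m.*2)) : s \in lower_full -> has_nesting s m.
Proof.
move=> sL; apply/(has_nestingP s m_gt0); right.
exists (fun i => m.*2.-1 - i), id; split=> /= [|i|i|]; try lia.
by apply: prescribed_arcs sL _ => i im /=; split; lia.
Qed.

Lemma even_uphalf_nestingE (s : 'S_(m.*2)) :
  has_nesting s m = (s \in (skip_right_any :|: skip_left_any) :|: lower_full).
Proof.
apply/idP/idP => [/(has_nestingP s m_gt0)[[a [b up]] | [a [b lo]]] | ].
- by rewrite in_setU (upper_arcs_even up).
- by rewrite in_setU (lower_arcs_even lo) orbT.
case/setUP => [/setUP[/bigcupP[p _] | /bigcupP[j _]] | ].
- exact: skip_right_nesting.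
- exact: skip_left_nesting.
- exact: lower_full_nesting.
Qed.

Let ord_m : 'I_(m.*2) := Ordinal (ltac:(lia) : m < m.*2).
Let ord_m1 : 'I_(m.*2) := Ordinal (ltac:(lia) : m.-1 < m.*2).

Lemma skip_right_left_both p j (s : 'S_(m.*2)) :
  j < m -> s \in skip_right p -> s \in skip_left j -> s \in skip_both.
Proof.
move=> jm /prescribedP sR /prescribedP sL.
(* [s m = m] forces [s (m-1) = m-1], which in turn forces [j = m-1] *)
have s_m : s ord_m = m :> nat by rewrite sL /=; lia.
have s_m1 : s ord_m1 = m.-1 :> nat.
  have := sR ord_m1 ltac:(simpl; lia); have := @perm_nat_inj _ s ord_m1 ord_m.
  by rewrite s_m /=; lia.
have j_eq : j = m.-1.
  have [jm1|] := ltnP j m.-1; last by lia.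
  by have := sL ord_m1 ltac:(simpl; lia); rewrite s_m1 /=; lia.
apply/prescribedP => x /= xm; have [x_lt | x_ge] := ltnP x m.-1.
  by rewrite sL /=; lia.
have [-> | ->] : x = ord_m1 \/ x = ord_m.
  by have [?|?] := ltnP x m; [left | right]; apply: val_inj => /=; lia.
- by rewrite s_m1 /=.
- by rewrite s_m /=.
Qed.

Lemma skip_both_sub_right : skip_both \subset skip_right m.-1.
Proof.
apply/subsetP => s /prescribedP sB; apply/prescribedP => x /= xm.
by rewrite sB /=; [case: ltnP => ?; lia | lia].
Qed.

Lemma skip_both_sub_left : skip_both \subset skip_left m.-1.
Proof.
apply/subsetP => s /prescribedP sB; apply/prescribedP => x /= /andP[x_le_m x_neq].
by rewrite sB /=; [case: ltnP => ?; lia | lia].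
Qed.

Lemma skip_right_left_any : skip_right_any :&: skip_left_any = skip_both.
Proof.
apply/setP => s; apply/setIP/idP => [[/bigcupP[p _ sR] /bigcupP[j _ sL]] | sB].
  exact: skip_right_left_both (ltn_ord j) sR sL.
split; apply/bigcupP.
  by exists (Ordinal (ltac:(lia) : m.-1 < m.+1)) => //; apply: (subsetP skip_both_sub_right).
by exists (Ordinal (ltac:(lia) : m.-1 < m)) => //; apply: (subsetP skip_both_sub_left).
Qed.

Definition rev_perm : 'S_(m.*2) := perm (@rev_ord_inj m.*2).

Lemma skip_right_lower_full p (s : 'S_(m.*2)) :
  s \in skip_right p -> s \in lower_full -> s = rev_perm.
Proof.
move=> /prescribedP sR /prescribedP sF.
have mp : m <= p.
  have := sR ord_m1 ltac:(simpl; lia); have := sF ord_m (leqnn _).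
  have := @perm_nat_inj _ s ord_m1 ord_m.
  by rewrite /=; lia.
apply/permP => x; apply: val_inj; rewrite permE /=.
by have [x_lt|x_ge] := ltnP x m; [rewrite sR | rewrite sF]; lia.
Qed.

Lemma skip_left_lower_full j : j < m -> [disjoint skip_left j & lower_full].
Proof.
move=> jm; rewrite disjoints_subset; apply/subsetP => s /prescribedP sL.
rewrite inE; apply/prescribedP => sF.
by have := sF ord_m (leqnn _); rewrite sL /=; lia.
Qed.

Lemma skip_any_lower_full :
  (skip_right_any :|: skip_left_any) :&: lower_full = [set rev_perm].
Proof.
apply/setP => s; rewrite in_set1; apply/idP/eqP => [| ->].
  case/setIP => /setUP[/bigcupP[p _ sR] | /bigcupP[j _ sL]] sF.
    exact: skip_right_lower_full sR sF.
  by rewrite (disjointFr (skip_left_lower_full (ltn_ord j)) sL) in sF.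
apply/setIP; split.
  apply/setUP; left; apply/bigcupP; exists ord_max => //.
  by apply/prescribedP => x /= xm; rewrite permE /=; lia.
by apply/prescribedP => x /= mx; rewrite permE /=; lia.
Qed.

Lemma card_skip_right p : #|skip_right p| = m`!.
Proof.
rewrite card_prescribed ?count_iota_lt => [|x xn Xx|x y xn yn Xx Xy]; try lia.
by congr _`!; lia.
Qed.

Lemma card_skip_left j : j < m -> #|skip_left j| = m`!.
Proof.
move=> jm.
rewrite card_prescribed ?count_iota_lt_neq => [|||x xn Xx|x y xn yn Xx Xy]; try lia.
by congr _`!; lia.
Qed.

Lemma card_lower_full : #|lower_full| = m`!.
Proof.
rewrite card_prescribed ?count_iota_ge => [|x xn Xx|x y xn yn Xx Xy]; try lia.
by congr _`!; lia.
Qed.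

Lemma card_skip_both : #|skip_both| = m.-1`!.
Proof.
rewrite card_prescribed ?count_iota_lt => [|x xn Xx|x y xn yn Xx Xy]; try (case: ifP; lia).
- by congr _`!; lia.
- by do 2!case: ifP => ?; lia.
Qed.

Lemma card_skip_right_any : #|skip_right_any| = m.+1 * m`!.
Proof.
apply: card_bigcup_disjoint => [p _ | p q /andP[pq qm]]; first exact: card_skip_right.
rewrite disjoints_subset; apply/subsetP => s /prescribedP sp; rewrite inE.
apply/prescribedP => sq; have pm : p < m.*2 by lia.
by have := sp (Ordinal pm); have := sq (Ordinal pm); rewrite /=; lia.
Qed.

Lemma card_skip_left_any : #|skip_left_any| = m * m`!.
Proof.
apply: card_bigcup_disjoint => [j jm | p q /andP[pq qm]]; first exact: card_skip_left.
rewrite disjoints_subset; apply/subsetP => s /prescribedP sp; rewrite inE.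
apply/prescribedP => sq; have q_lt : q < m.*2 by lia.
have q1_lt : q.-1 < m.*2 by lia.
have := sp (Ordinal q_lt); have := sq (Ordinal q1_lt).
by have := @perm_nat_inj _ s (Ordinal q_lt) (Ordinal q1_lt); rewrite /=; lia.
Qed.

Lemma NE_even : NE m.*2 (uphalf m.*2) = 2 * m.+1`! - m.-1`! - 1.
Proof.
rewrite NE_uphalf uphalf_double.
rewrite (eq_card (B := (skip_right_any :|: skip_left_any) :|: lower_full)) => [|s].
  2: by rewrite inE even_uphalf_nestingE.
rewrite cardsU skip_any_lower_full cards1 cardsU skip_right_left_any.
rewrite card_skip_right_any card_skip_left_any card_lower_full card_skip_both factS.
have : m.-1`! <= m`! by rewrite -(prednK m_gt0) factS leq_pmull.
have := fact_gt0 m.-1; move: (m`!) (m.-1`!) => f g; nia.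
Qed.

End EvenCase.

Theorem theorem2 (n m : nat) : (1 <= n)%N ->
  (n = m.*2.+1 -> NE n (uphalf n) = m`!) /\
  (n = m.*2 -> NE n (uphalf n) = (2 * m.+1`! - m.-1`! - 1)%N).
Proof.
move=> n_gt0; split=> n_eq; subst n; first exact: NE_odd.
by apply: NE_even; rewrite -double_gt0.
Qed.
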